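(* Let $R$ be a commutative ring with $1$, let $A,B\unlhd R$ be ideals, and let $n\ge 3$. Then $$ C_{\operatorname{GL}(n,R)}\Big(E(n,R,A),\big[E(n,R,(B:A)),E(n,R,A)\big]\Big)=C\big(n,R,(B:A)\big). $$
   Context: Commutators are left-normed: $[x,y]=xyx^{-1}y^{-1}$, and for subgroups $F,H$, $[F,H]$ is the subgroup generated by all $[f,h]$, $f\in F$, $h\in H$. For subgroups $F,H$ of a group $G$, the centraliser of $F$ modulo $H$ is $C_G(F,H)=\{g\in G\mid [f,g]\in H \text{ for all } f\in F\}$. For $\xi\in R$ and $1\le i\ne j\le n$, $t_{ij}(\xi)=e+\xi e_{ij}$. For an ideal $I$, $E(n,I)$ is the subgroup generated by all $t_{ij}(\xi)$, $\xi\in I$, $i\ne j$; $E(n,R)=E(n,R)$ with $I=R$ is the elementary group; and the relative elementary subgroup $E(n,R,I)$ is the normal closure of $E(n,I)$ in $E(n,R)$. The full congruence subgroup $C(n,R,I)$ is the set of $g\in\operatorname{GL}(n,R)$ whose image modulo $I$ is a scalar matrix $\lambda e$ with $\lambda\in (R/I)^*$, i.e. $g_{ij}\in I$ and $g_{ii}-g_{jj}\in I$ for all $i\ne j$. The ideal quotient is $(B:A)=\{x\in R\mid xA\subseteq B\}$. *)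

From HB Require Import structures.
From mathcomp Require Import all_boot all_order all_algebra.
Set Implicit Arguments. Unset Strict Implicit. Unset Printing Implicit Defensive.
Import GRing.Theory.
Local Open Scope ring_scope.

Section Defs.
Variables (R : comPzRingType) (n : nat).
Notation M := 'M[R]_n.

Definition is_ideal (I : R -> Prop) : Prop :=
  I 0 /\ (forall x y, I x -> I y -> I (x + y)) /\ (forall r x, I x -> I (r * x)).

Definition ideal_quot (B A : R -> Prop) : R -> Prop :=
  fun x => forall a, A a -> B (x * a).

Definition inv_of (x y : M) : Prop := x *m y = 1%:M /\ y *m x = 1%:M.

Definition GLn : M -> Prop := fun g => exists h, inv_of g h.

Inductive gen (S : M -> Prop) : M -> Prop :=
  | gen1 : gen S 1%:M
  | gen_in : forall x, S x -> gen S x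
  | gen_inv : forall x y, S x -> inv_of x y -> gen S y
  | gen_mul : forall x y, gen S x -> gen S y -> gen S (x *m y).

Definition comm_set (F H : M -> Prop) : M -> Prop :=
  fun z => exists f h f' h', [/\ F f, H h, inv_of f f', inv_of h h' &
                               z = f *m h *m f' *m h'].

Definition comm_subgroup (F H : M -> Prop) : M -> Prop := gen (comm_set F H).

Definition centr_mod (F H : M -> Prop) : M -> Prop :=
  fun g => GLn g /\ forall f f' g', F f -> inv_of f f' -> inv_of g g' ->
                                    H (f *m g *m f' *m g').

Definition transv (i j : 'I_n) (xi : R) : M := 1%:M + xi *: delta_mx i j.

Definition elem_ideal (I : R -> Prop) : M -> Prop :=
  gen (fun x => exists i j xi, [/\ i != j, I xi & x = transv i j xi]).

Definition elem : M -> Prop := elem_ideal (fun _ => True).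

(* relative elementary subgroup E(n,R,I): normal closure of E(n,I) in E(n,R) *)
Definition rel_elem (I : R -> Prop) : M -> Prop :=
  gen (fun x => exists g g' y, [/\ elem g, inv_of g g', elem_ideal I y &
                                  x = g *m y *m g']).

Definition full_cong (I : R -> Prop) : M -> Prop :=
  fun g => GLn g /\ forall i j : 'I_n, i != j -> I (g i j) /\ I (g i i - g j j).

End Defs.

From mathcomp Require Import all_boot all_order all_algebra.
From mathcomp Require Import ring zify.
Set Implicit Arguments. Unset Strict Implicit. Unset Printing Implicit Defensive.
Import GRing.Theory.
Local Open Scope ring_scope.

(* (=>) Elements of E(n,R,P) are congruent to 1 modulo P, so every element of H
   is congruent to 1 modulo IA, which is contained in B.  Applied to the
   commutator [t_ij(a), g] this says t_ij(a) g - g t_ij(a) has entries in B;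
   reading off suitable entries gives a g_ij and a (g_jj - g_ii) in B for all
   a in A, i.e. g is in C(n,R,I).

   (<=) Using [x y, g] = x [y, g] x^-1 [x, g] and the normality of H under E(n,R)
   and of C(n,R,I) under conjugation, it suffices to treat x = t_ij(a).  Then
   g t_ij(-a) g^-1 is the rank-one transvection 1 + u v with u = g e_i,
   v = -a e_j g^-1 and v u = 0.  A Koszul-type expansion writes v through the
   skew rows u_l e_k - u_k e_l of u; each factor of the corresponding product
   is split into elementary transvections lying in H, by the Chevalley
   commutator formula [t_ik(b), t_kj(a)] = t_ij(ba) with a third index k. *)

Section Inverses.
Variables (R : comPzRingType) (n : nat).
Local Notation M := 'M[R]_n.

Lemma inv_of_uniq (x y z : M) : inv_of x y -> inv_of x z -> y = z.
Proof. by move=> [xy yx] [xz _]; rewrite -[y]mulmx1 -xz mulmxA yx mul1mx. Qed.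

Lemma inv_of1 : inv_of (1%:M : M) 1%:M.
Proof. by split; rewrite mul1mx. Qed.

Lemma inv_of_sym (x y : M) : inv_of x y -> inv_of y x.
Proof. by case. Qed.

Lemma inv_of_mul (x x' y y' : M) :
  inv_of x x' -> inv_of y y' -> inv_of (x *m y) (y' *m x').
Proof.
move=> [xx' x'x] [yy' y'y]; split.
  by rewrite mulmxA -(mulmxA x) yy' mulmx1 xx'.
by rewrite mulmxA -(mulmxA y') x'x mulmx1 y'y.
Qed.

Lemma inv_of_conj (g g' x x' : M) :
  inv_of g g' -> inv_of x x' -> inv_of (g *m x *m g') (g *m x' *m g').
Proof.
by move=> hg hx; rewrite -[g *m x' *m g']mulmxA; apply/inv_of_mul/inv_of_sym/hg/inv_of_mul.
Qed.

Lemma conj_mul (g g' x y : M) :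
  inv_of g g' -> g *m (x *m y) *m g' = (g *m x *m g') *m (g *m y *m g').
Proof. by case=> _ g'g; rewrite !mulmxA -(mulmxA _ g') g'g mulmx1. Qed.

Lemma GLn_mul (x y : M) : GLn x -> GLn y -> GLn (x *m y).
Proof. by move=> [x' hx] [y' hy]; exists (y' *m x'); apply: inv_of_mul. Qed.

Lemma GLn_inv (x y : M) : inv_of x y -> GLn y.
Proof. by move=> hxy; exists x; apply: inv_of_sym. Qed.

End Inverses.

Section Generated.
Variables (R : comPzRingType) (n : nat) (S : 'M[R]_n -> Prop).
Hypothesis S_GL : forall s, S s -> GLn s.
Local Notation M := 'M[R]_n.

Lemma gen_GL (x : M) : gen S x -> GLn x.
Proof.
elim=> [|y /S_GL //|a b _ hab|a b _ hGa _ hGb].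
- by exists 1%:M; exact: inv_of1.
- exact: GLn_inv hab.
- exact: GLn_mul.
Qed.

Lemma gen_inv_closed (x y : M) : gen S x -> inv_of x y -> gen S y.
Proof.
move=> gx; elim: gx y => [|a Sa|a b Sa hab|a b ga IHa gb IHb] y hy.
- by rewrite (inv_of_uniq hy (@inv_of1 R n)); apply: gen1.
- exact: gen_inv Sa hy.
- by rewrite (inv_of_uniq hy (inv_of_sym hab)); apply: gen_in.
- have [a' ha] := gen_GL ga; have [b' hb] := gen_GL gb.
  rewrite (inv_of_uniq hy (inv_of_mul ha hb)).
  by apply: gen_mul; [apply: IHb | apply: IHa].
Qed.

Lemma gen_conj (g g' : M) : inv_of g g' ->
  (forall s, S s -> gen S (g *m s *m g')) ->
  forall x, gen S x -> gen S (g *m x *m g').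
Proof.
move=> hg hc x; elim=> [|a Sa|a b Sa hab|a b _ IHa _ IHb].
- by rewrite mulmx1 hg.1; apply: gen1.
- exact: hc.
- exact: gen_inv_closed (hc _ Sa) (inv_of_conj hg hab).
- by rewrite conj_mul //; apply: gen_mul.
Qed.

End Generated.

Lemma gen_min (R : comPzRingType) (n : nat) (S S' : 'M[R]_n -> Prop) :
  (forall s, S' s -> GLn s) -> (forall s, S s -> gen S' s) ->
  forall x, gen S x -> gen S' x.
Proof.
move=> S'_GL hsub x; elim=> [|a Sa|a b Sa hab|a b _ IHa _ IHb].
- exact: gen1.
- exact: hsub.
- exact: (gen_inv_closed S'_GL (hsub _ Sa) hab).
- exact: gen_mul.
Qed.

Section Ideals.
Variables (R : comPzRingType) (P : R -> Prop).
Hypothesis hP : is_ideal P.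

Lemma ideal0 : P 0.
Proof. by case: hP. Qed.

Lemma idealD (x y : R) : P x -> P y -> P (x + y).
Proof. by case: hP => _ [hD _]; apply: hD. Qed.

Lemma idealMl (x y : R) : P y -> P (x * y).
Proof. by case: hP => _ [_ hM]; apply: hM. Qed.

Lemma idealMr (x y : R) : P x -> P (x * y).
Proof. by rewrite mulrC; apply: idealMl. Qed.

Lemma idealN (x : R) : P x -> P (- x).
Proof. by rewrite -mulN1r; apply: idealMl. Qed.

Lemma idealB (x y : R) : P x -> P y -> P (x - y).
Proof. by move=> hx hy; apply: idealD => //; apply: idealN. Qed.

Lemma ideal_sum (T : finType) (Q : pred T) (F : T -> R) :
  (forall i, Q i -> P (F i)) -> P (\sum_(i | Q i) F i).
Proof. by move=> hF; apply: big_ind => //; [exact: ideal0 | exact: idealD]. Qed.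

Lemma ideal_sum_but (T : finType) (F : T -> R) (p : T) :
  (forall i, i != p -> P (F i)) -> P (\sum_i F i - F p).
Proof. by move=> hF; rewrite (bigD1 p) //= addrC addrK; apply: ideal_sum. Qed.

End Ideals.

Lemma ideal_quot_ideal (R : comPzRingType) (A B : R -> Prop) :
  is_ideal B -> is_ideal (ideal_quot B A).
Proof.
move=> hB; split; first by move=> a _; rewrite mul0r; apply: ideal0.
split; first by move=> x y hx hy a ha; rewrite mulrDl; apply: idealD; [|apply: hx|apply: hy].
by move=> r x hx a ha; rewrite -mulrA; apply: idealMl => //; apply: hx.
Qed.

Section Transvections.
Variables (R : comPzRingType) (n : nat).
Local Notation M := 'M[R]_n.

Definition trv (u : 'cV[R]_n) (s : 'rV[R]_n) : M := 1%:M + u *m s.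

Lemma trv_addr (u : 'cV[R]_n) (s1 s2 : 'rV[R]_n) :
  s1 *m u = 0 -> trv u s1 *m trv u s2 = trv u (s1 + s2).
Proof.
move=> h; rewrite /trv !(mulmxDl, mulmxDr) ?(mul1mx, mulmx1) mulmxA -(mulmxA u) h.
by rewrite mulmx0 mul0mx addr0 -addrA [u *m s2 + _]addrC.
Qed.

Lemma trv_addl (u1 u2 : 'cV[R]_n) (s : 'rV[R]_n) :
  s *m u2 = 0 -> trv u1 s *m trv u2 s = trv (u1 + u2) s.
Proof.
move=> h; rewrite /trv !(mulmxDl, mulmxDr) ?(mul1mx, mulmx1) mulmxA -(mulmxA u1) h.
by rewrite mulmx0 mul0mx addr0 -addrA [u2 *m s + _]addrC.
Qed.

Lemma trv0r (u : 'cV[R]_n) : trv u 0 = 1%:M.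
Proof. by rewrite /trv mulmx0 addr0. Qed.

Lemma trv0l (s : 'rV[R]_n) : trv 0 s = 1%:M.
Proof. by rewrite /trv mul0mx addr0. Qed.

Lemma trv_inv (u : 'cV[R]_n) (s : 'rV[R]_n) :
  s *m u = 0 -> inv_of (trv u s) (trv u (- s)).
Proof.
move=> h; split; first by rewrite trv_addr // subrr trv0r.
by rewrite trv_addr ?addNr ?trv0r // mulNmx h oppr0.
Qed.

Lemma trv_conj (h h' : M) (u : 'cV[R]_n) (s : 'rV[R]_n) :
  inv_of h h' -> h *m trv u s *m h' = trv (h *m u) (s *m h').
Proof. by case=> hh' _; rewrite /trv mulmxDr mulmxDl mulmx1 hh' !mulmxA. Qed.

Lemma trvZ (u : 'cV[R]_n) (s : 'rV[R]_n) (c : R) : trv (c *: u) s = trv u (c *: s).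
Proof. by rewrite /trv -scalemxAl scalemxAr. Qed.

Definition ecol (i : 'I_n) : 'cV[R]_n := delta_mx i 0.

Lemma ecolE (k p : 'I_n) : ecol k p 0 = (p == k)%:R.
Proof. by rewrite mxE eqxx andbT. Qed.

Lemma erow_mul (i : 'I_n) (u : 'cV[R]_n) : 'e_i *m u = (u i 0)%:M.
Proof.
apply/matrixP => a b; rewrite !ord1 !mxE (bigD1 i) //= big1 ?addr0.
  by rewrite mxE !eqxx mul1r.
by move=> k /negbTE hk; rewrite mxE hk mul0r.
Qed.

Lemma mul_ecol (i : 'I_n) (s : 'rV[R]_n) : s *m ecol i = (s 0 i)%:M.
Proof.
apply/matrixP => a b; rewrite !ord1 !mxE (bigD1 i) //= big1 ?addr0.
  by rewrite mxE !eqxx mulr1.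
by move=> k /negbTE hk; rewrite mxE hk mulr0.
Qed.

Lemma erow_ecol (j i : 'I_n) :
  'e_j *m ecol i = (if j == i then 1%:M else 0 : 'M[R]_1).
Proof.
by rewrite erow_mul ecolE; case: (j == i) => //; apply/matrixP => a b; rewrite !mxE mul0rn.
Qed.

Lemma row_mul_col (s : 'rV[R]_n) (x : 'cV[R]_n) : s *m x = (\sum_p s 0 p * x p 0)%:M.
Proof. by apply/matrixP => a b; rewrite !ord1 !mxE eqxx mulr1n. Qed.

Lemma col_sum (x : 'cV[R]_n) : x = \sum_p x p 0 *: ecol p.
Proof.
apply/matrixP => a b; rewrite summxE (bigD1 a) //= big1 => [|k hk].
  by rewrite !mxE !eqxx ord1 mulr1 addr0.
by rewrite !mxE eq_sym (negbTE hk) mulr0.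
Qed.

Lemma transv_trv (i j : 'I_n) (x : R) : transv i j x = trv (ecol i) (x *: 'e_j).
Proof. by rewrite /transv /trv -scalemxAr /ecol mul_delta_mx. Qed.

Lemma transv_trvZ (i j : 'I_n) (x : R) : transv i j x = trv (x *: ecol i) 'e_j.
Proof. by rewrite trvZ transv_trv. Qed.

Lemma transv_add (i j : 'I_n) (x y : R) : i != j ->
  transv i j x *m transv i j y = transv i j (x + y).
Proof.
move=> hij; rewrite !transv_trv trv_addr ?scalerDl //.
by rewrite -scalemxAl erow_ecol eq_sym (negbTE hij) scaler0.
Qed.

Lemma transv_inv (i j : 'I_n) (x : R) : i != j ->
  inv_of (transv i j x) (transv i j (- x)).
Proof.
by move=> hij; rewrite !transv_trv scaleNr; apply: trv_inv;
  rewrite -scalemxAl erow_ecol eq_sym (negbTE hij) scaler0.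
Qed.

Lemma transv_comm (i j k : 'I_n) (x y : R) : i != j -> j != k -> i != k ->
  transv i j x *m transv j k y *m transv i j (- x) *m transv j k (- y)
  = transv i k (x * y).
Proof.
move=> hij hjk hik; rewrite /transv.
set a := x *: delta_mx i j; set b := y *: delta_mx j k.
have prod0 (p q r s : 'I_n) (c d : R) : q != r ->
    (c *: delta_mx p q : M) *m (d *: delta_mx r s) = 0.
  by move=> hqr; rewrite -scalemxAl -scalemxAr mul_delta_mx_cond (negbTE hqr) !scaler0.
have aa : a *m a = 0 by apply: prod0; rewrite eq_sym.
have bb : b *m b = 0 by apply: prod0; rewrite eq_sym.
have ba : b *m a = 0 by apply: prod0; rewrite eq_sym.
have ab : a *m b = (x * y) *: delta_mx i k.
  by rewrite -scalemxAl -scalemxAr mul_delta_mx scalerA.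
rewrite -/a -/b !scaleNr -/a -/b.
rewrite !(mulmxDl, mulmxDr, mul1mx, mulmx1, mulmxN, mulNmx, mulmxA) aa.
rewrite -(mulmxA a b a) ba -!(mulmxA a b b) bb ab.
rewrite ?(mulmx0, mul0mx, oppr0, addr0, add0r, opprK).
by rewrite subrK (addrC a) addrA addrK addrAC addrK.
Qed.

(* If s e_m = 0, e_m w = 0 and s w = 0, then trv w s is the commutator of
   trv w e_m and trv e_m s.  This is how a third index is exploited. *)
Lemma trv_commutator (m : 'I_n) (w : 'cV[R]_n) (s : 'rV[R]_n) :
  s *m w = 0 -> s *m ecol m = 0 -> ('e_m : 'rV_n) *m w = 0 ->
  trv w s = trv w 'e_m *m trv (ecol m) s *m trv w (- 'e_m) *m trv (ecol m) (- s).
Proof.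
move=> hsw hsm hmw.
rewrite (trv_conj (ecol m) s (trv_inv hmw)).
have -> : trv w 'e_m *m ecol m = ecol m + w.
  by rewrite /trv mulmxDl mul1mx -mulmxA erow_ecol eqxx mulmx1 addrC.
have -> : s *m trv w (- 'e_m) = s.
  by rewrite /trv mulmxDr mulmx1 mulmxA hsw mul0mx addr0.
by rewrite addrC -trv_addl // -mulmxA (trv_inv hsm).1 mulmx1.
Qed.

End Transvections.
Arguments ecol {R n}.

Section Subgroups.
Variables (R : comPzRingType) (n : nat).
Local Notation M := 'M[R]_n.

Definition transv_gens (P : R -> Prop) : M -> Prop :=
  fun x => exists i j xi, [/\ i != j, P xi & x = transv i j xi].

Definition rel_gens (P : R -> Prop) : M -> Prop :=
  fun x => exists g g' y, [/\ elem g, inv_of g g', elem_ideal P y & x = g *m y *m g'].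

Lemma transv_gens_GL (P : R -> Prop) (s : M) : transv_gens P s -> GLn s.
Proof. by case=> i [j [xi [hij _ ->]]]; exists (transv i j (- xi)); apply: transv_inv. Qed.

Lemma elem_GL (P : R -> Prop) (x : M) : elem_ideal P x -> GLn x.
Proof. exact: (gen_GL (@transv_gens_GL P)). Qed.

Lemma elem_inv (P : R -> Prop) (x y : M) :
  elem_ideal P x -> inv_of x y -> elem_ideal P y.
Proof. exact: (gen_inv_closed (@transv_gens_GL P)). Qed.

Lemma transv_elem_ideal (P : R -> Prop) (i j : 'I_n) (c : R) :
  i != j -> P c -> elem_ideal P (transv i j c).
Proof. by move=> hij hc; apply: gen_in; exists i, j, c. Qed.

Lemma transv_elem (i j : 'I_n) (c : R) : i != j -> elem (transv i j c).
Proof. by move=> hij; apply: transv_elem_ideal. Qed.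

Lemma elem_ideal_elem (P : R -> Prop) (x : M) : elem_ideal P x -> elem x.
Proof.
apply: gen_min; first exact: transv_gens_GL.
by move=> s [i [j [xi [hij _ ->]]]]; apply: transv_elem.
Qed.

Lemma rel_gens_GL (P : R -> Prop) (s : M) : rel_gens P s -> GLn s.
Proof.
case=> g [g' [y [eg hg ey ->]]].
by apply: GLn_mul; [apply: GLn_mul; [exact: elem_GL eg | exact: elem_GL ey] | exact: GLn_inv hg].
Qed.

Lemma rel_GL (P : R -> Prop) (x : M) : rel_elem P x -> GLn x.
Proof. exact: (gen_GL (@rel_gens_GL P)). Qed.

Lemma elem_rel (P : R -> Prop) (x : M) : elem_ideal P x -> rel_elem P x.
Proof.
apply: gen_min; first exact: rel_gens_GL.
move=> s hs; apply: gen_in; exists 1%:M, 1%:M, s; split.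
- exact: gen1.
- exact: inv_of1.
- exact: gen_in.
- by rewrite mul1mx mulmx1.
Qed.

Lemma transv_rel (P : R -> Prop) (i j : 'I_n) (c : R) :
  i != j -> P c -> rel_elem P (transv i j c).
Proof. by move=> hij hc; apply/elem_rel/transv_elem_ideal. Qed.

Lemma rel_elem_elem (P : R -> Prop) (x : M) : rel_elem P x -> elem x.
Proof.
apply: gen_min; first exact: transv_gens_GL.
move=> s [g [g' [y [eg hg ey ->]]]].
apply: gen_mul; first apply: gen_mul => //.
  exact: elem_ideal_elem ey.
exact: elem_inv eg hg.
Qed.

Lemma rel_conj (P : R -> Prop) (g g' x : M) : elem g -> inv_of g g' ->
  rel_elem P x -> rel_elem P (g *m x *m g').
Proof.
move=> eg hg; apply: gen_conj => //; first exact: rel_gens_GL.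
move=> s [g0 [g0' [y [eg0 hg0 ey ->]]]]; apply: gen_in.
exists (g *m g0), (g0' *m g'), y; split => //.
- exact: gen_mul.
- exact: inv_of_mul.
- by rewrite !mulmxA.
Qed.

End Subgroups.

Section CommutatorSubgroup.
Variables (R : comPzRingType) (n : nat) (F G : 'M[R]_n -> Prop).
Hypotheses (F_GL : forall x, F x -> GLn x) (G_GL : forall x, G x -> GLn x).
Local Notation M := 'M[R]_n.

Lemma comm_set_GL (x : M) : comm_set F G x -> GLn x.
Proof.
case=> f [h [f' [h' [Ff Gh hf hh ->]]]].
apply: GLn_mul; last exact: GLn_inv hh.
apply: GLn_mul; last exact: GLn_inv hf.
by apply: GLn_mul; [apply: F_GL | apply: G_GL].
Qed.

Lemma comm_subgroup_inv (x y : M) :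
  comm_subgroup F G x -> inv_of x y -> comm_subgroup F G y.
Proof. exact: (gen_inv_closed comm_set_GL). Qed.

Lemma comm_subgroup_comm (f h f' h' : M) : F f -> G h -> inv_of f f' -> inv_of h h' ->
  comm_subgroup F G (f *m h *m f' *m h').
Proof. by move=> *; apply: gen_in; exists f, h, f', h'. Qed.

Lemma comm_subgroup_conj (g g' : M) : inv_of g g' ->
  (forall x, F x -> F (g *m x *m g')) -> (forall x, G x -> G (g *m x *m g')) ->
  forall x, comm_subgroup F G x -> comm_subgroup F G (g *m x *m g').
Proof.
move=> hg hF hG; apply: gen_conj => //; first exact: comm_set_GL.
move=> s [f [h [f' [h' [Ff Gh hf hh ->]]]]]; rewrite !(conj_mul _ _ hg).
by apply: comm_subgroup_comm; [apply: hF | apply: hG | apply: inv_of_conj..].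
Qed.

End CommutatorSubgroup.

Lemma exists_third (n : nat) (p q : 'I_n) : (3 <= n)%N -> exists r : 'I_n, r != p /\ r != q.
Proof.
move=> hn; have h0 : (0 < n)%N by lia.
have h1 : (1 < n)%N by lia.
have h2 : (2 < n)%N by lia.
have [/andP[? ?]|e0] := boolP ((Ordinal h0 != p) && (Ordinal h0 != q)).
  by exists (Ordinal h0).
have [/andP[? ?]|e1] := boolP ((Ordinal h1 != p) && (Ordinal h1 != q)).
  by exists (Ordinal h1).
exists (Ordinal h2); move: e0 e1; rewrite -!val_eqE /=.
by case: p q => [p hp] [q hq] /=; lia.
Qed.

(* mx_in P N: every entry of N lies in P.  An element x is congruent to 1
   modulo P when mx_in P (x - 1). *)
Section Level.
Variables (R : comPzRingType) (n : nat) (P : R -> Prop).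
Hypothesis hP : is_ideal P.
Local Notation M := 'M[R]_n.

Definition mx_in (N : M) : Prop := forall p q, P (N p q).

Lemma mx_in_add (X Y : M) : mx_in X -> mx_in Y -> mx_in (X + Y).
Proof. by move=> hX hY p q; rewrite mxE; apply: idealD. Qed.

Lemma mx_in_opp (X : M) : mx_in X -> mx_in (- X).
Proof. by move=> hX p q; rewrite mxE; apply: idealN. Qed.

Lemma mx_in_mull (X N : M) : mx_in N -> mx_in (X *m N).
Proof. by move=> hN p q; rewrite mxE; apply: ideal_sum => // k _; exact: idealMl. Qed.

Lemma mx_in_mulr (X N : M) : mx_in N -> mx_in (N *m X).
Proof. by move=> hN p q; rewrite mxE; apply: ideal_sum => // k _; exact: idealMr. Qed.

Lemma gen_level (S : M -> Prop) :
  (forall s, S s -> mx_in (s - 1%:M)) -> forall x, gen S x -> mx_in (x - 1%:M).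
Proof.
move=> hS x; elim=> [|s Ss|s y Ss hsy|x1 x2 _ IH1 _ IH2].
- by rewrite subrr => p q; rewrite mxE; apply: ideal0.
- exact: hS.
- have -> : y - 1%:M = - ((s - 1%:M) *m y) by rewrite mulmxBl hsy.1 mul1mx opprB.
  by apply/mx_in_opp/mx_in_mulr/hS.
- have -> : x1 *m x2 - 1%:M = (x1 - 1%:M) *m x2 + (x2 - 1%:M).
    by rewrite mulmxBl mul1mx addrA subrK.
  by apply: mx_in_add => //; apply: mx_in_mulr.
Qed.

Lemma elem_level (x : M) : elem_ideal P x -> mx_in (x - 1%:M).
Proof.
apply: gen_level => s [i [j [c [hij hc ->]]]] p q.
by rewrite /transv addrC addKr mxE; apply: idealMr.
Qed.

Lemma rel_level (x : M) : rel_elem P x -> mx_in (x - 1%:M).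
Proof.
apply: gen_level => s [g [g' [y [eg hg ey ->]]]].
have -> : g *m y *m g' - 1%:M = g *m (y - 1%:M) *m g'.
  by rewrite mulmxBr mulmxBl mulmx1 hg.1.
by apply/mx_in_mulr/mx_in_mull/elem_level.
Qed.

End Level.

Section CommutatorLevel.
Variables (R : comPzRingType) (n : nat) (I A B : R -> Prop).
Hypotheses (hI : is_ideal I) (hA : is_ideal A) (hB : is_ideal B).
Hypothesis hIA : forall x y, I x -> A y -> B (x * y).
Local Notation M := 'M[R]_n.

Lemma mx_in_prod (X Y : M) : mx_in I X -> mx_in A Y ->
  mx_in B (X *m Y) /\ mx_in B (Y *m X).
Proof.
move=> hX hY; split=> p q; rewrite mxE; apply: ideal_sum => // k _.
  exact: hIA.
by rewrite mulrC; apply: hIA.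
Qed.

Lemma comm_level (f h f' h' : M) : inv_of f f' -> inv_of h h' ->
  mx_in I (f - 1%:M) -> mx_in A (h - 1%:M) -> mx_in B (f *m h *m f' *m h' - 1%:M).
Proof.
move=> hf hh hF hH.
have -> : f *m h *m f' *m h' - 1%:M =
    ((f - 1%:M) *m (h - 1%:M) - (h - 1%:M) *m (f - 1%:M)) *m (f' *m h').
  rewrite !(mulmxBl, mulmxBr) !(mul1mx, mulmx1) !mulmxA.
  rewrite -(mulmxA h f f') hf.1 mulmx1 hh.1 !mul1mx.
  move: (f *m h *m f' *m h') (h *m f' *m h') (f' *m h') => X b c.
  by apply/matrixP => p q; rewrite !mxE; ring.
have [hFH hHF] := mx_in_prod hF hH.
by apply: mx_in_mulr => //; apply: mx_in_add => //; apply: mx_in_opp.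
Qed.

Lemma comm_subgroup_level (x : M) :
  comm_subgroup (rel_elem I) (rel_elem A) x -> mx_in B (x - 1%:M).
Proof.
apply: gen_level => // s [f [h [f' [h' [If Ah hf hh ->]]]]].
by apply: comm_level => //; apply: rel_level.
Qed.

End CommutatorLevel.

Section CentraliserInCongruence.
Variables (R : comPzRingType) (n : nat) (A B : R -> Prop).
Hypotheses (hA : is_ideal A) (hB : is_ideal B).
Local Notation M := 'M[R]_n.
Local Notation I := (ideal_quot B A).

Lemma transv_commute_entry (g : M) (i j : 'I_n) (a : R) (p q : 'I_n) :
  (transv i j a *m g - g *m transv i j a) p q
  = a * ((p == i)%:R * g j q - g p i * (q == j)%:R).
Proof.
rewrite /transv mulmxDl mulmxDr mul1mx mulmx1 -scalemxAl -scalemxAr.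
rewrite opprD addrACA subrr add0r !mxE mulrBr.
congr (a * _ - a * _).
  rewrite (bigD1 j) //= big1 ?addr0 => [|k hk]; first by rewrite mxE eqxx andbT.
  by rewrite mxE (negbTE hk) andbF mul0r.
rewrite (bigD1 i) //= big1 ?addr0 => [|k hk]; first by rewrite mxE eqxx.
by rewrite mxE (negbTE hk) mulr0.
Qed.

Lemma centraliser_entry (g : M) :
  centr_mod (rel_elem A) (comm_subgroup (rel_elem I) (rel_elem A)) g ->
  forall (i j : 'I_n) (a : R) (p q : 'I_n), i != j -> A a ->
  B (a * ((p == i)%:R * g j q - g p i * (q == j)%:R)).
Proof.
case=> [[g' hg] hc] i j a p q hij ha.
have hX := hc _ _ _ (transv_rel hij ha) (transv_inv a hij) hg.
have hL := comm_subgroup_level (ideal_quot_ideal A hB) hA hB (fun x y hx => hx y) hX.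
have := mx_in_mulr hB (g *m transv i j a) hL p q.
rewrite -transv_commute_entry.
suff -> : (transv i j a *m g *m transv i j (- a) *m g' - 1%:M) *m (g *m transv i j a)
   = transv i j a *m g - g *m transv i j a by [].
rewrite mulmxBl mul1mx !mulmxA -(mulmxA _ g' g) hg.2 mulmx1.
by rewrite -(mulmxA _ (transv i j (- a))) (transv_inv a hij).2 mulmx1.
Qed.

Lemma centraliser_sub_cong (g : M) : (3 <= n)%N ->
  centr_mod (rel_elem A) (comm_subgroup (rel_elem I) (rel_elem A)) g ->
  full_cong I g.
Proof.
move=> hn hc; split; first by case: hc.
move=> i j hij; split=> b hb.
  have [r [hri hrj]] := exists_third j i hn.
  have hjr : j != r by rewrite eq_sym.
  have := centraliser_entry hc i r hjr hb.
  rewrite eqxx (negbTE hij) mul0r sub0r mulr1 => h.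
  by rewrite (_ : _ * _ = - (b * - g i j)); [apply: (idealN hB) | ring].
have := centraliser_entry hc i j hij hb; rewrite !eqxx !mul1r mulr1 => h.
by rewrite (_ : _ * _ = - (b * (g j j - g i i))); [apply: (idealN hB) | ring].
Qed.

End CentraliserInCongruence.

Section CongruenceSubgroup.
Variables (R : comPzRingType) (n : nat) (I : R -> Prop).
Hypothesis hI : is_ideal I.
Local Notation M := 'M[R]_n.

Lemma full_cong_off (g : M) (p q : 'I_n) : full_cong I g -> p != q -> I (g p q).
Proof. by case=> _ hg hpq; case: (hg p q hpq). Qed.

Lemma full_cong_diag (g : M) (p q : 'I_n) : full_cong I g -> I (g p p - g q q).
Proof.
case=> _ hg; have [->|hpq] := eqVneq p q; last by case: (hg p q hpq).
by rewrite subrr; apply: ideal0.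
Qed.

Lemma inv_diag_prod (g g' : M) (p : 'I_n) : full_cong I g -> g' *m g = 1%:M ->
  I (1 - g' p p * g p p).
Proof.
move=> hg e; have := congr1 (fun m : M => m p p) e; rewrite /= !mxE eqxx mulr1n => <-.
by apply: ideal_sum_but => // k hk; apply: idealMl => //; apply: full_cong_off.
Qed.

Lemma full_cong_inv (g g' : M) : full_cong I g -> inv_of g g' -> full_cong I g'.
Proof.
move=> hg hgg'; have e := hgg'.2; split; first exact: GLn_inv hgg'.
have off p q : p != q -> I (g' p q).
  move=> hpq; have h0 : \sum_k g' p k * g k q = 0.
    by have := congr1 (fun m : M => m p q) e; rewrite /= !mxE (negbTE hpq) mulr0n.
  have hpq' : I (g' p q * g q q).
    rewrite -[g' p q * g q q]opprK -(sub0r (g' p q * g q q)) -{1}h0.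
    apply: (idealN hI); apply: (ideal_sum_but hI) => k hk.
    by apply: idealMl => //; apply: full_cong_off.
  rewrite (_ : g' p q = g' p q * (1 - g' q q * g q q) + g' q q * (g' p q * g q q)).
    by apply: (idealD hI); apply: (idealMl hI) => //; apply: inv_diag_prod.
  by ring.
move=> p q hpq; split; first exact: off.
have hp := inv_diag_prod p hg e; have hq := inv_diag_prod q hg e.
rewrite (_ : g' p p - g' q q = g' p p * (1 - g' q q * g q q) - g' q q * (1 - g' p p * g p p)
   + g' p p * g' q q * (g q q - g p p)); last by ring.
apply: (idealD hI); first by apply: (idealB hI); apply: (idealMl hI).
by apply: (idealMl hI); apply: full_cong_diag.
Qed.

Lemma full_cong_conj (g h h' : M) : full_cong I g -> inv_of h h' -> full_cong I (h *m g *m h').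
Proof.
move=> hg hh; split.
  by apply: GLn_mul; [apply: GLn_mul; [exists h'| case: hg] | exact: GLn_inv hh].
(* modulo I, g is the scalar g_oo for any index o *)
have split_g (o : 'I_n) : h *m g *m h' = (g o o)%:M + h *m (g - (g o o)%:M) *m h'.
  by rewrite mulmxBr mulmxBl mul_mx_scalar -scalemxAl hh.1 scalemx1 addrC subrK.
have small (o : 'I_n) p q : I ((h *m (g - (g o o)%:M) *m h') p q).
  apply: mx_in_mulr => //; apply: mx_in_mull => // {}p {}q; rewrite !mxE.
  have [<-|hpq] := eqVneq p q; first by rewrite mulr1n; apply: full_cong_diag.
  by rewrite mulr0n subr0; apply: full_cong_off.
have entry (c : R) (X : M) p q : (c%:M + X) p q = c *+ (p == q) + X p q.
  by rewrite mxE [c%:M p q]mxE.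
move=> p q hpq; rewrite (split_g p) !entry !eqxx (negbTE hpq) mulr0n mulr1n add0r.
split; first exact: small.
by rewrite opprD addrACA subrr add0r; apply: (idealB hI); apply: small.
Qed.

End CongruenceSubgroup.

Section SkewRows.
Variables (R : comPzRingType) (n : nat).
Local Notation M := 'M[R]_n.

Lemma scalar_mx0 (m : nat) : (0 : R)%:M = 0 :> 'M[R]_m.
Proof. exact: raddf0. Qed.

Definition skew_row (u : 'cV[R]_n) (k l : 'I_n) : 'rV[R]_n :=
  u l 0 *: 'e_k - u k 0 *: 'e_l.

Definition pair_part (u : 'cV[R]_n) (k l : 'I_n) : 'cV[R]_n :=
  u k 0 *: ecol k + u l 0 *: ecol l.

Lemma skew_rowE (u : 'cV[R]_n) (k l q : 'I_n) :
  skew_row u k l 0 q = u l 0 * (q == k)%:R - u k 0 * (q == l)%:R.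
Proof. by rewrite !mxE !eqxx. Qed.

Lemma scaled_skew_rowE (u : 'cV[R]_n) (k l q : 'I_n) (c : R) :
  (c *: skew_row u k l) 0 q = c * (u l 0 * (q == k)%:R - u k 0 * (q == l)%:R).
Proof. by rewrite mxE skew_rowE. Qed.

Lemma pair_partE (u : 'cV[R]_n) (k l p : 'I_n) :
  pair_part u k l p 0 = u k 0 * (p == k)%:R + u l 0 * (p == l)%:R.
Proof. by rewrite !mxE !eqxx !andbT. Qed.

Lemma pair_part_complE (u : 'cV[R]_n) (k l p : 'I_n) :
  (u - pair_part u k l) p 0 = u p 0 - (u k 0 * (p == k)%:R + u l 0 * (p == l)%:R).
Proof. by rewrite -pair_partE !mxE. Qed.

Lemma skew_row_mul (u : 'cV[R]_n) (k l : 'I_n) : skew_row u k l *m u = 0.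
Proof.
rewrite mulmxBl -!scalemxAl !erow_mul !scale_scalar_mx.
by rewrite (mulrC (u k 0)) subrr.
Qed.

Lemma skew_row_pair (u : 'cV[R]_n) (k l : 'I_n) (c : R) : k != l ->
  (c *: skew_row u k l) *m pair_part u k l = 0.
Proof.
move=> hkl; rewrite row_mul_col (bigD1 k) //= (bigD1 l) 1?eq_sym //= big1 ?addr0.
  rewrite !scaled_skew_rowE !pair_partE !eqxx (negbTE hkl) eq_sym (negbTE hkl) /=.
  by rewrite (_ : _ + _ = 0) ?scalar_mx0 //; ring.
move=> p /andP [hpk hpl]; rewrite pair_partE (negbTE hpk) (negbTE hpl).
by rewrite !mulr0 addr0 mulr0.
Qed.

Lemma skew_row_ecol (u : 'cV[R]_n) (k l m : 'I_n) (c : R) : m != k -> m != l ->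
  (c *: skew_row u k l) *m ecol m = 0.
Proof.
move=> hmk hml; rewrite mul_ecol scaled_skew_rowE (negbTE hmk) (negbTE hml).
by rewrite !mulr0 subrr mulr0 scalar_mx0.
Qed.

Lemma erow_pair_part (u : 'cV[R]_n) (k l m : 'I_n) : m != k -> m != l ->
  ('e_m : 'rV_n) *m pair_part u k l = 0.
Proof.
by move=> hmk hml; rewrite erow_mul pair_partE (negbTE hmk) (negbTE hml) !mulr0 addr0 scalar_mx0.
Qed.

Lemma trv_pair_split (u : 'cV[R]_n) (s : 'rV[R]_n) (k l : 'I_n) :
  s *m u = 0 -> s *m pair_part u k l = 0 ->
  trv u s = trv (pair_part u k l) s *m trv (u - pair_part u k l) s.
Proof.
move=> h1 h2; rewrite trv_addl; first by rewrite addrC subrK.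
by rewrite mulmxBr h1 h2 subrr.
Qed.

Lemma trv_pair_erow (u : 'cV[R]_n) (k l m : 'I_n) : m != k -> m != l ->
  trv (pair_part u k l) 'e_m = transv k m (u k 0) *m transv l m (u l 0).
Proof.
move=> hmk hml; rewrite !transv_trvZ trv_addl // -scalemxAr erow_ecol (negbTE hml).
by rewrite scaler0.
Qed.

Lemma skew_expansion (u : 'cV[R]_n) (v w : 'rV[R]_n) :
  \sum_l w 0 l * u l 0 = 1 -> \sum_k v 0 k * u k 0 = 0 ->
  v = \sum_(pr : 'I_n * 'I_n) (v 0 pr.1 * w 0 pr.2) *: skew_row u pr.1 pr.2.
Proof.
move=> wu vu; apply/rowP => q; rewrite summxE.
rewrite -(pair_bigA _ (fun k l => ((v 0 k * w 0 l) *: skew_row u k l) 0 q)) /=.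
symmetry; transitivity (\sum_k \sum_l ((v 0 k * (q == k)%:R) * (w 0 l * u l 0)
     - (w 0 l * (q == l)%:R) * (v 0 k * u k 0))).
  by apply: eq_bigr => k _; apply: eq_bigr => l _; rewrite scaled_skew_rowE; ring.
under eq_bigr => k _ do rewrite sumrB -mulr_sumr wu mulr1 -mulr_suml.
rewrite sumrB -mulr_sumr vu mulr0 subr0.
rewrite (bigD1 q) //= eqxx mulr1 big1 ?addr0 // => k hk.
by rewrite eq_sym (negbTE hk) mulr0.
Qed.

(* A regrouping of t [h1 h2, P2 P1] into three factors, used to see that a
   product of commutators lies in H. *)
Lemma commutator_regroup (t t' h1 h1' h2 h2' P1 P1' P2 P2' : M) :
  t' *m t = 1%:M -> h1' *m h1 = 1%:M -> P2' *m P2 = 1%:M -> h2' *m h2 = 1%:M ->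
  t *m (h1 *m h2 *m (P2 *m P1) *m (h2' *m h1') *m (P1' *m P2')) =
  (t *m (h1 *m (h2 *m P2 *m h2' *m P2') *m h1') *m t') *m (t *m (h1 *m P2 *m h1' *m P2'))
   *m (P2 *m (h1 *m h2 *m P1 *m (h2' *m h1') *m P1') *m P2').
Proof.
move=> ht hh1 hP2 hh2; rewrite !mulmxA.
rewrite -(mulmxA _ t' t) ht mulmx1 -(mulmxA _ h1' h1) hh1 mulmx1.
rewrite -(mulmxA _ P2' P2) hP2 mulmx1 -(mulmxA _ P2' P2) hP2 mulmx1.
by rewrite -(mulmxA _ h1' h1) hh1 mulmx1 -(mulmxA _ h2' h2) hh2 mulmx1.
Qed.

End SkewRows.

Section MixedCommutator.
Variables (R : comPzRingType) (n : nat) (A I : R -> Prop).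
Hypotheses (hA : is_ideal A) (hI : is_ideal I) (hn : (3 <= n)%N).
Local Notation M := 'M[R]_n.
Local Notation H := (comm_subgroup (rel_elem I) (rel_elem A)).

Lemma H_inv (x y : M) : H x -> inv_of x y -> H y.
Proof. exact: (comm_subgroup_inv (@rel_GL R n I) (@rel_GL R n A)). Qed.

Lemma H_conj (g g' x : M) : elem g -> inv_of g g' -> H x -> H (g *m x *m g').
Proof.
move=> eg hg; apply: (comm_subgroup_conj (@rel_GL R n I) (@rel_GL R n A) hg);
  by move=> y; apply: rel_conj.
Qed.

Definition transv_in_H (c : R) : Prop := forall p q : 'I_n, p != q -> H (transv p q c).

(* t_pq(ab) = [t_pr(b), t_rq(a)] with a third index r. *)
Lemma transv_in_H_AI (a b : R) : A a -> I b -> transv_in_H (a * b).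
Proof.
move=> ha hb p q hpq; have [r [hrp hrq]] := exists_third p q hn.
rewrite eq_sym in hrp; rewrite mulrC -(transv_comm b a hrp hrq hpq).
by apply: comm_subgroup_comm;
  [apply: transv_rel | apply: transv_rel | apply: transv_inv | apply: transv_inv].
Qed.

(* Transvections with a common column multiply by adding rows, so H contains
   trv u (sum of s_k) once it contains each trv u s_k (if s_k u = 0); dually for
   a common row. *)
Lemma trv_sumr (T : finType) (Q : pred T) (u : 'cV[R]_n) (s : T -> 'rV[R]_n) :
  (forall k, Q k -> s k *m u = 0) -> (forall k, Q k -> H (trv u (s k))) ->
  H (trv u (\sum_(k | Q k) s k)).
Proof.
move=> h0 hH; suff [] : (\sum_(k | Q k) s k) *m u = 0 /\ H (trv u (\sum_(k | Q k) s k)) by [].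
apply: (big_ind (fun t => t *m u = 0 /\ H (trv u t))) => [|t1 t2 [e1 H1] [e2 H2]|k Qk].
- by rewrite mul0mx trv0r; split => //; apply: gen1.
- by rewrite mulmxDl e1 e2 addr0 -trv_addr //; split => //; apply: gen_mul.
- by split; [apply: h0 | apply: hH].
Qed.

Lemma trv_suml (T : finType) (Q : pred T) (u : T -> 'cV[R]_n) (s : 'rV[R]_n) :
  (forall k, Q k -> s *m u k = 0) -> (forall k, Q k -> H (trv (u k) s)) ->
  H (trv (\sum_(k | Q k) u k) s).
Proof.
move=> h0 hH; suff [] : s *m (\sum_(k | Q k) u k) = 0 /\ H (trv (\sum_(k | Q k) u k) s) by [].
apply: (big_ind (fun t => s *m t = 0 /\ H (trv t s))) => [|t1 t2 [e1 H1] [e2 H2]|k Qk].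
- by rewrite mulmx0 trv0l; split => //; apply: gen1.
- by rewrite mulmxDr e1 e2 addr0 -trv_addl //; split => //; apply: gen_mul.
- by split; [apply: h0 | apply: hH].
Qed.

(* trv x s is a product of the elementary transvections t_pq(x_p s_q). *)
Lemma trv_in_H (x : 'cV[R]_n) (s : 'rV[R]_n) :
  (forall p, x p 0 * s 0 p = 0) ->
  (forall p q, p != q -> transv_in_H (x p 0 * s 0 q)) -> H (trv x s).
Proof.
move=> hd ho; rewrite [x]col_sum; apply: trv_suml => p _.
  by rewrite -scalemxAr mul_ecol scale_scalar_mx hd scalar_mx0.
rewrite trvZ [_ *: s]row_sum_delta; apply: trv_sumr => q _.
  rewrite -scalemxAl erow_ecol; case: eqP => [->|_]; last exact: scaler0.
  by rewrite mxE hd scale0r.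
rewrite mxE -transv_trv.
have [->|hqp] := eqVneq q p; last by apply: ho; rewrite eq_sym.
by rewrite hd /transv scale0r addr0; apply: gen1.
Qed.

Lemma trv_skew_off_pair (u : 'cV[R]_n) (k l : 'I_n) (c : R) : k != l ->
  (forall p r, transv_in_H (c * ((u - pair_part u k l) p 0 * r))) ->
  H (trv (u - pair_part u k l) (c *: skew_row u k l)).
Proof.
move=> hkl hc; apply: trv_in_H => [p|p q _]; last first.
  by rewrite scaled_skew_rowE mulrCA; apply: hc.
rewrite pair_part_complE scaled_skew_rowE.
have [->|hpk] := eqVneq p k; first by rewrite (negbTE hkl) /=; ring.
have [->|hpl] := eqVneq p l; first by rewrite /=; ring.
by rewrite /=; ring.
Qed.

Lemma trv_skew_in_H (u : 'cV[R]_n) (k l : 'I_n) (c : R) :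
  k != l -> (forall r, transv_in_H (c * r)) -> H (trv u (c *: skew_row u k l)).
Proof.
move=> hkl hc; have [m [hmk hml]] := exists_third k l hn.
set S := c *: skew_row u k l.
have hSu : S *m u = 0 by rewrite -scalemxAl skew_row_mul scaler0.
have hSw := skew_row_pair u c hkl; have hSm := skew_row_ecol u c hmk hml.
have hmw := erow_pair_part u hmk hml.
(* trv e_m S is a product of transvections t_mq(c r) *)
have hP : H (trv (ecol m) S).
  apply: trv_in_H => [p|p q _]; last by rewrite scaled_skew_rowE mulrCA; apply: hc.
  rewrite ecolE scaled_skew_rowE; case: eqP => [->|];
    by rewrite ?(negbTE hmk) ?(negbTE hml) ?mulr0 ?subrr ?mulr0 ?mul0r.
rewrite (trv_pair_split hSu hSw); apply: gen_mul; last first.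
  by apply: trv_skew_off_pair => // p r; rewrite mulrA; apply: hc.
rewrite (trv_commutator hSw hSm hmw); apply: gen_mul; last exact: H_inv hP (trv_inv hSm).
apply: H_conj => //; last exact: trv_inv.
by rewrite trv_pair_erow //; apply: gen_mul; apply: transv_elem; rewrite eq_sym.
Qed.


(* t_ij(a) [h, P] lies in H for h = t_im(x) t_jm(z) in E(n,R) and
   P = t_mj(-adx) t_mi(adz), whenever z is in I and 1 - d x^2 is in I:
   regrouped, it is a product of conjugates of elements of H. *)
Lemma pair_commutator_in_H (i j m : 'I_n) (a d x z : R) :
  i != j -> m != i -> m != j -> A a -> I z -> I (1 - d * x ^+ 2) ->
  let c2 := - a * d * x in let c1 := a * (d * z) in
  H (transv i j a *m ((transv i m x *m transv j m z) *m (transv m j c2 *m transv m i c1)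
     *m (transv j m (- z) *m transv i m (- x)) *m (transv m i (- c1) *m transv m j (- c2)))).
Proof.
move=> hij hmi hmj ha hz hd c2 c1.
have him : i != m by rewrite eq_sym.
have hjm : j != m by rewrite eq_sym.
have hc2 : A c2 by apply: (idealMr hA); apply: (idealMr hA); apply: (idealN hA).
rewrite (commutator_regroup _ _ (transv_inv a hij).2 (transv_inv x him).2
  (transv_inv c2 hmj).2 (transv_inv z hjm).2).
apply: gen_mul; first apply: gen_mul.
- (* a conjugate of the generator [t_jm(z), t_mj(c2)] of H *)
  apply: H_conj (transv_elem _ hij) (transv_inv _ hij) _.
  apply: H_conj (transv_elem _ him) (transv_inv _ him) _.
  apply: comm_subgroup_comm; [apply: transv_rel | apply: transv_rel | apply: transv_inv..] => //.
- (* t_ij(a) [t_im(x), t_mj(c2)] = t_ij(a (1 - d x^2)) *)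
  rewrite transv_comm // transv_add // (_ : a + x * c2 = a * (1 - d * x ^+ 2)).
    exact: transv_in_H_AI.
  by rewrite /c2; ring.
- (* a conjugate of [h, t_mi(c1)] with t_mi(c1) in H *)
  apply: H_conj (transv_elem _ hmj) (transv_inv _ hmj) _.
  have hP1 : H (transv m i c1) by apply: transv_in_H_AI => //; apply: (idealMl hI).
  apply: gen_mul; last exact: H_inv hP1 (transv_inv _ hmi).
  apply: H_conj hP1; first by apply: gen_mul; apply: transv_elem.
  by apply: inv_of_mul; apply: transv_inv.
Qed.


Lemma principal_factor_in_H (u : 'cV[R]_n) (i j : 'I_n) (a d : R) :
  i != j -> A a -> (forall p, p != i -> I (u p 0)) -> I (1 - d * u i 0 ^+ 2) ->
  H (transv i j a *m trv u ((- a * d) *: skew_row u j i)).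
Proof.
move=> hij ha hu hd; have hji : j != i by rewrite eq_sym.
have [m [hmi hmj]] := exists_third i j hn.
set S := (- a * d) *: skew_row u j i.
have hSu : S *m u = 0 by rewrite -scalemxAl skew_row_mul scaler0.
have hSw := skew_row_pair u (- a * d) hji.
have hSm := skew_row_ecol u (- a * d) hmj hmi.
have hmw := erow_pair_part u hmj hmi.
rewrite (trv_pair_split hSu hSw) mulmxA; apply: gen_mul; last first.
  apply: trv_skew_off_pair => // p r.
  rewrite (_ : _ * _ = a * ((u - pair_part u j i) p 0 * (- d * r))); last by ring.
  apply: transv_in_H_AI => //; apply: (idealMr hI); rewrite pair_part_complE.
  have [->|hpj] := eqVneq p j.
    by rewrite (negbTE hji) mulr1 mulr0 addr0 subrr; apply: ideal0.
  have [->|hpi] := eqVneq p i; first by rewrite mulr0 mulr1 add0r subrr; apply: ideal0.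
  by rewrite !mulr0 addr0 subr0; apply: hu.
(* the part on the coordinates i, j is a commutator of explicit transvections *)
rewrite (trv_commutator hSw hSm hmw).
have him : i != m by rewrite eq_sym.
have hjm : j != m by rewrite eq_sym.
set x := u i 0; set z := u j 0.
have eh : trv (pair_part u j i) 'e_m = transv i m x *m transv j m z.
  by rewrite /pair_part addrC trv_pair_erow.
have eP : trv (ecol m) S = transv m j (- a * d * x) *m transv m i (a * (d * z)).
  rewrite !transv_trv trv_addr; last by rewrite -scalemxAl erow_ecol (negbTE hjm) scaler0.
  by congr trv; apply/rowP => q; rewrite scaled_skew_rowE !mxE !eqxx /x /z /=; ring.
have eh' : trv (pair_part u j i) (- 'e_m) = transv j m (- z) *m transv i m (- x).
  by apply: (inv_of_uniq (trv_inv hmw)); rewrite eh; apply: inv_of_mul; apply: transv_inv.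
have eP' : trv (ecol m) (- S) = transv m i (- (a * (d * z))) *m transv m j (- (- a * d * x)).
  by apply: (inv_of_uniq (trv_inv hSm)); rewrite eP; apply: inv_of_mul; apply: transv_inv.
rewrite eh eP eh' eP'; exact: (pair_commutator_in_H hij hmi hmj ha (hu j hji) hd).
Qed.

(* The remaining factors of the expansion each have a coefficient in AI. *)
Lemma skew_terms_in_H (u : 'cV[R]_n) (v w : 'rV[R]_n) (i j : 'I_n) (a : R) : A a ->
  (forall k, k != j -> I (v 0 k)) -> (forall l, l != i -> I (w 0 l)) ->
  H (trv u (\sum_(pr | pr != (j, i))
              (- a) *: ((v 0 pr.1 * w 0 pr.2) *: skew_row u pr.1 pr.2))).
Proof.
move=> ha hv hw; apply: trv_sumr => [[k l] _|[k l] /= hkl].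
  by rewrite -!scalemxAl skew_row_mul !scaler0.
rewrite scalerA; have [<-|nkl] := eqVneq k l.
  by rewrite /skew_row subrr scaler0 trv0r; apply: gen1.
apply: trv_skew_in_H => // r.
rewrite (_ : _ * r = - a * (v 0 k * w 0 l * r)); last by ring.
apply: transv_in_H_AI; first exact: (idealN hA).
move: hkl; rewrite xpair_eqE negb_and => /orP [hk|hl].
  by apply: (idealMr hI); apply: (idealMr hI); apply: hv.
by apply: (idealMr hI); apply: (idealMl hI); apply: hw.
Qed.

(* For g in C(n,R,I), the commutator [t_ij(a), g] lies in H: g t_ij(-a) g^-1
   is the rank-one transvection trv u (-a v) with u = g e_i, v = e_j g^-1,
   and v is expanded along the skew rows of u. *)
Lemma transv_commutator_in_H (g g' : M) (i j : 'I_n) (a : R) :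
  full_cong I g -> inv_of g g' -> i != j -> A a ->
  H (transv i j a *m g *m transv i j (- a) *m g').
Proof.
move=> hg hgg' hij ha; have g'g := hgg'.2; have hg' := full_cong_inv hI hg hgg'.
set u := col i g; set v := row j g'; set w := row i g'.
have conjE : g *m transv i j (- a) *m g' = trv u ((- a) *: v).
  by rewrite transv_trv (trv_conj _ _ hgg') -colE -scalemxAl -rowE.
have -> : transv i j a *m g *m transv i j (- a) *m g' = transv i j a *m trv u ((- a) *: v).
  by rewrite -conjE !mulmxA.
have wu : \sum_l w 0 l * u l 0 = 1.
  have := congr1 (fun m : M => m i i) g'g; rewrite /= !mxE eqxx mulr1n => <-.
  by apply: eq_bigr => l _; rewrite !mxE.
have vu : \sum_k v 0 k * u k 0 = 0.
  transitivity ((g' *m g) j i); last by rewrite g'g mxE eq_sym (negbTE hij).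
  by rewrite mxE; apply: eq_bigr => l _; rewrite !mxE.
rewrite (skew_expansion wu vu) scaler_sumr (bigD1 (j, i)) //= -trv_addr; last first.
  by rewrite -!scalemxAl skew_row_mul !scaler0.
rewrite mulmxA scalerA; apply: gen_mul; last first.
  apply: skew_terms_in_H => // [k|l] hkl; rewrite mxE.
    by apply: full_cong_off hg' _; rewrite eq_sym.
  by apply: full_cong_off hg' _; rewrite eq_sym.
apply: principal_factor_in_H => //; first by move=> p hpi; rewrite mxE; apply: full_cong_off.
rewrite !mxE (_ : 1 - _ = (1 - g' i i * g i i) * (1 + g' i i * g i i)
                         - g' i i * g i i ^+ 2 * (g' j j - g' i i)); last by ring.
apply: (idealB hI); first by apply: (idealMr hI); apply: inv_diag_prod.
by apply: (idealMl hI); apply: full_cong_diag.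
Qed.

End MixedCommutator.

Section Reduction.
Variables (R : comPzRingType) (n : nat) (A I : R -> Prop).
Hypotheses (hA : is_ideal A) (hI : is_ideal I) (hn : (3 <= n)%N).
Local Notation M := 'M[R]_n.
Local Notation H := (comm_subgroup (rel_elem I) (rel_elem A)).

Definition centralises_cong (x : M) : Prop :=
  forall g g' x', full_cong I g -> inv_of g g' -> inv_of x x' -> H (x *m g *m x' *m g').

Lemma commutator_mulg (x x' y y' g g' : M) : inv_of x x' -> inv_of g g' ->
  x *m y *m g *m (y' *m x') *m g' = (x *m (y *m g *m y' *m g') *m x') *m (x *m g *m x' *m g').
Proof.
move=> hx hg; rewrite !mulmxA -(mulmxA _ x' x) hx.2 mulmx1.
by rewrite -(mulmxA _ g' g) hg.2 mulmx1.
Qed.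

Lemma gen_centralises_cong (S : M -> Prop) : (forall s, S s -> GLn s) ->
  (forall x, gen S x -> elem x) ->
  (forall s, S s -> centralises_cong s) ->
  (forall s s', S s -> inv_of s s' -> centralises_cong s') ->
  forall x, gen S x -> centralises_cong x.
Proof.
move=> S_GL S_elem hS hSinv x; elim=> [|s Ss|s y Ss hsy|x1 x2 g1 IH1 g2 IH2] g g' x' hg hgg' hx.
- by rewrite -(inv_of_uniq (@inv_of1 R n) hx) mul1mx mulmx1 hgg'.1; apply: gen1.
- exact: hS.
- exact: hSinv hsy g g' x' hg hgg' hx.
- have [x1' h1] := gen_GL S_GL g1; have [x2' h2] := gen_GL S_GL g2.
  rewrite -(inv_of_uniq (inv_of_mul h1 h2) hx) (commutator_mulg _ _ h1 hgg').
  apply: gen_mul; last exact: IH1.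
  by apply: (H_conj (S_elem _ g1) h1); apply: IH2.
Qed.

Lemma elem_centralises_cong (x : M) : elem_ideal A x -> centralises_cong x.
Proof.
apply: gen_centralises_cong; [exact: transv_gens_GL | exact: elem_ideal_elem | |].
- move=> s [i [j [a [hij ha ->]]]] g g' s' hg hgg' hs.
  rewrite -(inv_of_uniq (transv_inv a hij) hs); exact: transv_commutator_in_H.
- move=> s s' [i [j [a [hij ha ->]]]] hs g g' s'' hg hgg' hs'.
  have es' : s' = transv i j (- a) := inv_of_uniq hs (transv_inv a hij).
  rewrite es' in hs' *; rewrite -(inv_of_uniq (transv_inv (- a) hij) hs').
  by apply: transv_commutator_in_H => //; apply: (idealN hA).
Qed.

(* [g0 y g0^-1, g] = g0 [y, g0^-1 g g0] g0^-1. *)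
Lemma rel_gens_centralises_cong (s : M) : rel_gens A s -> centralises_cong s.
Proof.
move=> [g0 [g0' [y [eg hg0 ey ->]]]] g g' s' hg hgg' hs.
have [y' hy] := elem_GL ey.
rewrite -(inv_of_uniq (inv_of_conj hg0 hy) hs).
have -> : g0 *m y *m g0' *m g *m (g0 *m y' *m g0') *m g' =
    g0 *m (y *m (g0' *m g *m g0) *m y' *m (g0' *m g' *m g0)) *m g0'.
  by rewrite !mulmxA -(mulmxA _ g0 g0') hg0.1 mulmx1.
apply: H_conj => //; apply: elem_centralises_cong => //.
- by apply: full_cong_conj => //; apply: inv_of_sym.
- exact: inv_of_conj (inv_of_sym hg0) hgg'.
Qed.

Lemma rel_centralises_cong (x : M) : rel_elem A x -> centralises_cong x.
Proof.
apply: gen_centralises_cong; [exact: rel_gens_GL | exact: rel_elem_elem | |].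
  exact: rel_gens_centralises_cong.
move=> s s' [g0 [g0' [y [eg hg0 ey ->]]]] hs.
have [y' hy] := elem_GL ey; rewrite -(inv_of_uniq (inv_of_conj hg0 hy) hs).
apply: rel_gens_centralises_cong; exists g0, g0', y'; split => //.
exact: elem_inv ey hy.
Qed.

Lemma cong_sub_centraliser (g : M) :
  full_cong I g -> centr_mod (rel_elem A) H g.
Proof.
move=> hg; split; first by case: hg.
by move=> f f' g' hf hff' hgg'; apply: rel_centralises_cong.
Qed.

End Reduction.

Theorem theorem2 (R : comPzRingType) (n : nat) (A B : R -> Prop)
  (hA : is_ideal A) (hB : is_ideal B) (hn : (3 <= n)%N) :
  forall g : 'M[R]_n,
    centr_mod (rel_elem A)
      (comm_subgroup (rel_elem (ideal_quot B A)) (rel_elem A)) g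
    <-> full_cong (ideal_quot B A) g.
Proof.
move=> g; split; first exact: centraliser_sub_cong.
exact: cong_sub_centraliser hA (ideal_quot_ideal A hB) hn g.
Qed.
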